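(* Let $G$ be a multigraph of even order $n$, let $S \subseteq V(G)$ with $|S|$ odd and $|S| \ge 3$, let $F$ be a 1-factor of $G$, and let $\Delta = \Delta(G)$. Then $$\operatorname{ex}(\langle S\rangle, \Delta-1; G-F) \le \operatorname{ex}(\langle S\rangle, \Delta; G) + \min\{(n-|S|-1)/2,\ (|S|-1)/2\}.$$
   Context: Multigraphs are finite and loopless, multiple edges allowed. For a host multigraph $K$ and $S\subseteq V(K)$ of odd size at least 3, $\langle S\rangle$ denotes the subgraph of $K$ induced by $S$, and $\operatorname{ex}(\langle S\rangle, k; K) = e(\langle S\rangle) - k(|S|-1)/2$ is its $k$-excess computed in $K$ (here $e(\cdot)$ is the number of edges). *)

From mathcomp Require Import all_boot all_order all_algebra.
Set Implicit Arguments. Unset Strict Implicit. Unset Printing Implicit Defensive.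
Import Order.TTheory GRing.Theory Num.Theory.

(* A finite loopless multigraph on vertex set T is given by its edge
   multiplicity function m : T -> T -> nat (m x y = number of edges xy). *)
Definition multigraph (T : finType) (m : T -> T -> nat) : Prop :=
  (forall x y, m x y = m y x) /\ (forall x, m x x = 0%N).

Definition deg (T : finType) (m : T -> T -> nat) (x : T) : nat :=
  (\sum_(y : T) m x y)%N.

Definition maxdeg (T : finType) (m : T -> T -> nat) : nat :=
  (\max_(x : T) deg m x)%N.

Definition one_factor (T : finType) (G F : T -> T -> nat) : Prop :=
  multigraph F /\ (forall x y, F x y <= G x y)%N /\ (forall x, deg F x = 1%N).

Definition gdel (T : finType) (G F : T -> T -> nat) : T -> T -> nat :=
  fun x y => (G x y - F x y)%N.

(* e(<S>) : number of edges of K with both ends in S (each edge counted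
   twice in the ordered double sum, hence the halving) *)
Definition e_ind (T : finType) (m : T -> T -> nat) (S : {set T}) : nat :=
  (\sum_(x in S) \sum_(y in S) m x y)./2.

Definition excess (T : finType) (m : T -> T -> nat) (S : {set T}) (k : rat) : rat :=
  ((e_ind m S)%:R - k * ((#|S|%:R - 1) / 2))%R.

From mathcomp Require Import all_boot all_order all_algebra.
From mathcomp Require Import zify ring lra.
Import Order.TTheory GRing.Theory Num.Theory.

Set Implicit Arguments.
Unset Strict Implicit.

(* Removing F from G lowers the excess weight k to k - 1, which gains (|S|-1)/2,
   and loses e(<S>) - e(<S>; G - F) >= a./2 edges, where a counts the F-edges
   inside S (twice).  As F is a perfect matching, at most n - |S| vertices of S
   are matched outside S, so a >= 2|S| - n; with n even this gives
   a./2 >= |S| - n/2, whence the first bound, and a./2 >= 0 gives the second. *)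

Section PerfectMatchingCut.

Variables (T : finType) (F : T -> T -> nat) (S : {set T}).
Hypotheses (Fsym : forall x y, F x y = F y x) (Fdeg : forall x, deg F x = 1%N).

Lemma matching_inside_add_cut :
  (\sum_(x in S) \sum_(y in S) F x y + \sum_(x in S) \sum_(y in ~: S) F x y
   = #|S|)%N.
Proof.
rewrite -big_split /= -sum1_card; apply: eq_bigr => x _.
rewrite -(Fdeg x) /deg [RHS](bigID (mem S)) /=.
by congr (_ + _)%N; apply: eq_bigl => y; rewrite in_setC.
Qed.

Lemma matching_cut_le_card :
  (\sum_(x in S) \sum_(y in ~: S) F x y <= #|~: S|)%N.
Proof.
rewrite exchange_big /= -sum1_card; apply: leq_sum => y _.
rewrite -(Fdeg y) /deg [X in (_ <= X)%N](bigID (mem S)) /=.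
by under eq_bigr do rewrite Fsym; exact: leq_addr.
Qed.

Lemma matching_inside_lower_bound :
  (2 * #|S| <= \sum_(x in S) \sum_(y in S) F x y + #|T|)%N.
Proof.
have := matching_inside_add_cut; have := matching_cut_le_card.
by rewrite -(cardsC S); lia.
Qed.

End PerfectMatchingCut.

Lemma sum_gdel_add (T : finType) (G F : T -> T -> nat) (A B : {set T}) :
  (forall x y, F x y <= G x y)%N ->
  (\sum_(x in A) \sum_(y in B) G x y
   = \sum_(x in A) \sum_(y in B) gdel G F x y
     + \sum_(x in A) \sum_(y in B) F x y)%N.
Proof.
move=> FG; rewrite -big_split /=; apply: eq_bigr => x _.
by rewrite -big_split /=; apply: eq_bigr => y _; rewrite /gdel subnK.
Qed.

Lemma e_ind_gdel_add_le (T : finType) (G F : T -> T -> nat) (S : {set T}) :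
  (forall x y, F x y <= G x y)%N ->
  (e_ind (gdel G F) S + (\sum_(x in S) \sum_(y in S) F x y)./2 <= e_ind G S)%N.
Proof. by move=> FG; rewrite /e_ind (sum_gdel_add S S FG) halfD leq_addl. Qed.

Lemma double_leq_half_add_even (a n s : nat) :
  ~~ odd n -> (2 * s <= a + n)%N -> (2 * s <= 2 * a./2 + n)%N.
Proof.
move=> even_n; have := odd_double_half a; have := odd_double_half n.
rewrite (negbTE even_n) -!muln2; case: (odd a) => /=; lia.
Qed.

Lemma excess_pred_weight (T : finType) (m : T -> T -> nat) (S : {set T}) (k : rat) :
  excess m S (k - 1) = (excess m S k + (#|S|%:R - 1) / 2)%R.
Proof. by rewrite /excess; ring. Qed.

Theorem mainTheorem4 (T : finType) (G F : T -> T -> nat) (S : {set T}) :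
  multigraph G -> ~~ odd #|T| ->
  odd #|S| -> (3 <= #|S|)%N ->
  one_factor G F ->
  (excess (gdel G F) S ((maxdeg G)%:R - 1)
   <= excess G S (maxdeg G)%:R
      + Num.min ((#|T|%:R - #|S|%:R - 1) / 2) ((#|S|%:R - 1) / 2) :> rat)%R.
Proof.
move=> _ even_T _ _ [[Fsym _] [FG Fdeg]].
set a := (\sum_(x in S) \sum_(y in S) F x y)./2%N.
have lost_edges : ((e_ind (gdel G F) S)%:R + a%:R <= (e_ind G S)%:R :> rat)%R.
  by rewrite -natrD ler_nat e_ind_gdel_add_le.
have inside : (2 * #|S|%:R <= 2 * a%:R + #|T|%:R :> rat)%R.
  rewrite -[2%R]/(2%:R)%R -!natrM -natrD ler_nat.
  exact: double_leq_half_add_even (matching_inside_lower_bound S Fsym Fdeg).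
have a_ge0 : (0 <= a%:R :> rat)%R by [].
rewrite excess_pred_weight /excess minEle; set weight := (_ * _)%R.
by case: ifP => _; lra.
Qed.
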